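(* Let $n\ge1$, let $0<x_1<x_2<\dots<x_{n+1}<1$, and let $A$ be the $(n+1)\times(n+1)$ Bernstein–Vandermonde matrix, $a_{r,c}=\binom{n}{c-1}x_r^{\,c-1}(1-x_r)^{n-c+1}$. Then all pivots $p_{i,j}$ ($1\le j\le i\le n+1$) of the Neville elimination of $A$ are nonzero (so it proceeds without row exchanges), and for $1\le j\le n$, $j+1\le i\le n+1$ the multipliers are $$m_{i,j}=\frac{p_{i,j}}{p_{i-1,j}}=\frac{(1-x_i)^{n-j+1}(1-x_{i-j})\prod_{k=1}^{j-1}(x_i-x_{i-k})}{(1-x_{i-1})^{n-j+2}\prod_{k=2}^{j}(x_{i-1}-x_{i-k})},$$ where empty products equal $1$.
   Context: Neville elimination of a nonsingular $N\times N$ matrix $M$: set $M_1=M$ and, for $t=1,\dots,N-1$, obtain $M_{t+1}=(a^{(t+1)}_{i,j})$ from $M_t=(a^{(t)}_{i,j})$ by $a^{(t+1)}_{i,j}=a^{(t)}_{i,j}$ if $i\le t$; $a^{(t+1)}_{i,j}=a^{(t)}_{i,j}-\big(a^{(t)}_{i,t}/a^{(t)}_{i-1,t}\big)a^{(t)}_{i-1,j}$ if $i\ge t+1$ and $j\ge t+1$; and $a^{(t+1)}_{i,j}=0$ otherwise. The pivot $(i,j)$ is $p_{i,j}=a^{(j)}_{i,j}$ for $1\le j\le i\le N$ (the procedure is carried out without row exchanges when all pivots $p_{i,j}$, $j\le i<N$, are nonzero), and the multiplier is $m_{i,j}=p_{i,j}/p_{i-1,j}$ for $j<i$. *)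

From mathcomp Require Import all_boot all_order all_algebra.
Set Implicit Arguments. Unset Strict Implicit. Unset Printing Implicit Defensive.
Import Order.TTheory GRing.Theory Num.Theory.
Local Open Scope ring_scope.

(* Matrices are represented as functions of 1-based indices (i, j);
   entries outside 1..N are irrelevant (never used by the statement). *)

(* Neville elimination: neville M t = M_t, for t >= 1 (neville M 0 = M_1 = M). *)
Fixpoint neville_step {R : fieldType} (M : nat -> nat -> R) (t : nat)
  : nat -> nat -> R :=
  match t with
  | 0%N | 1%N => M
  | t'.+1 =>
      let A := neville_step M t' in
      fun i j =>
        if (i <= t')%N then A i j
        else if (t'.+1 <= j)%N then A i j - (A i t' / A i.-1 t') * A i.-1 j
        else 0
  end.

Definition pivot {R : fieldType} (M : nat -> nat -> R) (i j : nat) : R :=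
  neville_step M j i j.

Definition multiplier {R : fieldType} (M : nat -> nat -> R) (i j : nat) : R :=
  pivot M i j / pivot M i.-1 j.

Definition bernstein_vandermonde {R : pzRingType} (n : nat) (x : nat -> R)
  : nat -> nat -> R :=
  fun r c => ('C(n, c.-1))%:R * x r ^+ c.-1 * (1 - x r) ^+ (n - c.-1).

From mathcomp Require Import all_boot all_order all_algebra.
From mathcomp Require Import ring zify.
Set Implicit Arguments. Unset Strict Implicit. Unset Printing Implicit Defensive.
Import Order.TTheory GRing.Theory Num.Theory.
Local Open Scope ring_scope.

(* With y_r = x_r / (1 - x_r), row r of the Bernstein-Vandermonde matrix is
   (1 - x_r)^n (C(n, c-1) y_r^(c-1))_c.  A Neville step on rows of this shape
   acts as a divided difference in the nodes y: by induction on t, the entry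
   (i, j) of M_(t+1) is (1 - x_i)^n C(n, j-1) prod_(k=1..t) (y_i - y_(i-k))
   times the t-th divided difference of y^(j-1) at y_(i-t), ..., y_i.  The
   t-th divided difference of y^t is 1, so the pivots are
   (1 - x_i)^n C(n, j-1) prod_(k<j) (y_i - y_(i-k)), which are nonzero because
   y is strictly increasing; the multipliers are quotients of these. *)

Section DividedDifferences.

Variables (R : fieldType) (z : nat -> R).

(* divdiff f t i is the divided difference f[z_(i-t), ..., z_i]. *)
Fixpoint divdiff (f : nat -> R) (t : nat) : nat -> R :=
  match t with
  | 0%N => f
  | t'.+1 => fun i => (divdiff f t' i - divdiff f t' i.-1) / (z i - z (i - t)%N)
  end.

Lemma divdiffS f t i :
  divdiff f t.+1 i = (divdiff f t i - divdiff f t i.-1) / (z i - z (i - t.+1)%N).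
Proof. by []. Qed.

Lemma eq_divdiff f g t : f =1 g -> divdiff f t =1 divdiff g t.
Proof. by move=> fg; elim: t => [|t IH] i //=; rewrite !IH. Qed.

Lemma divdiff_cst c t : divdiff (fun _ => c) t.+1 =1 (fun _ => 0).
Proof.
elim: t => [|t IH] i /=; first by rewrite subrr mul0r.
by rewrite /= in IH; rewrite !IH subrr mul0r.
Qed.

Variable N : nat.
Hypothesis z_neq : forall a b, (1 <= b)%N -> (b < a)%N -> (a <= N)%N -> z a != z b.

Lemma divdiff_mulz f t i : (t.+2 <= i <= N)%N ->
  divdiff (fun r => z r * f r) t.+1 i = z i * divdiff f t.+1 i + divdiff f t i.-1.
Proof.
elim: t i => [|t IH] i /andP[hi hN].
  have dz : z i - z i.-1 != 0 by rewrite subr_eq0 z_neq //; lia.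
  by rewrite /= subn1; field.
rewrite divdiffS !IH; try (apply/andP; split; lia).
have dz : z i - z (i - t.+2)%N != 0 by rewrite subr_eq0 z_neq //; lia.
have dz' : z i.-1 - z (i - t.+2)%N != 0 by rewrite subr_eq0 z_neq //; lia.
rewrite (divdiffS f t.+1 i) (divdiffS f t i.-1).
have -> : (i.-1 - t.+1 = i - t.+2)%N by lia.
by field; rewrite dz dz'.
Qed.

Lemma divdiff_exp m t i : (m <= t)%N -> (t < i <= N)%N ->
  divdiff (fun r => z r ^+ m) t i = (m == t)%:R.
Proof.
elim: m t i => [|m IH] [|t] i // hm /andP[hi hN].
- by rewrite (@eq_divdiff _ (fun _ => 1)) ?divdiff_cst // => r; rewrite expr0.
- rewrite (@eq_divdiff _ (fun r => z r * z r ^+ m)) => [|r]; last by rewrite exprS.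
  rewrite divdiff_mulz ?IH; try lia; try (apply/andP; split; lia).
  by rewrite eqSS (_ : (m == t.+1) = false) ?mulr0 ?add0r //; apply/eqP; lia.
Qed.

End DividedDifferences.

Lemma neville_stepSS (R : fieldType) (M : nat -> nat -> R) s i j :
  neville_step M s.+2 i j =
  if (i <= s.+1)%N then neville_step M s.+1 i j
  else if (s.+2 <= j)%N then neville_step M s.+1 i j -
     (neville_step M s.+1 i s.+1 / neville_step M s.+1 i.-1 s.+1)
       * neville_step M s.+1 i.-1 j
  else 0.
Proof. by []. Qed.

Lemma big_nat_pred_sub (R : Type) (idx : R) (op : R -> R -> R) (F : nat -> R) i j :
  \big[op/idx]_(1 <= k < j) F (i.-1 - k)%N = \big[op/idx]_(2 <= k < j.+1) F (i - k)%N.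
Proof.
rewrite (big_add1 _ _ 1); apply: eq_big_nat => k _.
by have -> : (i - k.+1 = i.-1 - k)%N by lia.
Qed.

Section BernsteinVandermonde.

Variables (R : realFieldType) (n : nat) (x : nat -> R).
Hypothesis x01 : forall r, (1 <= r <= n.+1)%N -> 0 < x r /\ x r < 1.
Hypothesis x_incr : forall r, (1 <= r)%N -> (r < n.+1)%N -> x r < x r.+1.

Definition odds (r : nat) : R := x r / (1 - x r).

Definition odds_gaps (j i : nat) : R := \prod_(1 <= k < j) (odds i - odds (i - k)%N).

Lemma lt_x a b : (1 <= b)%N -> (b < a)%N -> (a <= n.+1)%N -> x b < x a.
Proof.
move=> hb; elim: a => // a IH hba ha.
have [ltba|ltab|<-] := ltngtP b a; last by apply: x_incr; lia.
- by apply: (lt_trans (IH ltba _)); [lia | apply: x_incr; lia].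
- by lia.
Qed.

Lemma subx_neq0 r : (1 <= r <= n.+1)%N -> 1 - x r != 0.
Proof. by case/x01=> _ x1; rewrite subr_eq0 eq_sym lt_eqF. Qed.

Lemma odds_neq a b : (1 <= b)%N -> (b < a)%N -> (a <= n.+1)%N -> odds a != odds b.
Proof.
move=> hb hba ha.
have ra : (1 <= a <= n.+1)%N by lia.
have rb : (1 <= b <= n.+1)%N by lia.
have [[_ xa1] [_ xb1]] := (x01 ra, x01 rb).
have [na nb] := (subx_neq0 ra, subx_neq0 rb).
have -> : odds a = odds b + (x a - x b) / ((1 - x a) * (1 - x b)).
  by rewrite /odds; field; rewrite na nb.
rewrite -subr_eq0 addrC addKr; apply/lt0r_neq0.
by rewrite divr_gt0 ?mulr_gt0 ?subr_gt0 ?lt_x.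
Qed.

Lemma odds_gaps_neq0 i j : (j <= i <= n.+1)%N -> odds_gaps j i != 0.
Proof.
move=> /andP[hji hi]; rewrite prodf_seq_neq0; apply/allP => k.
by rewrite mem_index_iota /= subr_eq0 => hk; apply: odds_neq; lia.
Qed.

Notation A := (bernstein_vandermonde n x).

Lemma neville_step_bv s i j : (s < n.+1)%N -> (s.+1 <= i <= n.+1)%N -> (s.+1 <= j)%N ->
  neville_step A s.+1 i j =
    (1 - x i) ^+ n * ('C(n, j.-1))%:R * odds_gaps s.+1 i
    * divdiff odds (fun r => odds r ^+ j.-1) s i.
Proof.
elim: s i j => [|s IH] i j hs /andP[hi hiN] hj.
  rewrite /= /bernstein_vandermonde /odds_gaps big_geq // mulr1.
  have [jn|jn] := leqP j.-1 n; last by rewrite bin_small // !mul0r mulr0 mul0r.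
  have ni : 1 - x i != 0 by apply: subx_neq0; lia.
  have -> : (1 - x i) ^+ n = (1 - x i) ^+ (n - j.-1) * (1 - x i) ^+ j.-1.
    by rewrite -exprD subnK.
  by rewrite expr_div_n; field; rewrite expf_neq0.
have pivS k : (s.+1 <= k <= n.+1)%N -> divdiff odds (fun r => odds r ^+ s) s k = 1.
  by move=> hk; rewrite (divdiff_exp odds_neq) ?eqxx //; lia.
rewrite neville_stepSS ifF ?ifT; try lia.
rewrite !IH; try lia; try (apply/andP; split; lia).
rewrite !pivS ?divdiffS; try lia.
rewrite /odds_gaps [\prod_(1 <= k < s.+2) _]big_nat_recr //=.
have nP : odds_gaps s.+1 i.-1 != 0 by apply: odds_gaps_neq0; lia.
have nw : (1 - x i.-1) ^+ n != 0 by rewrite expf_neq0 // subx_neq0 //; lia.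
have nC : ('C(n, s))%:R != 0 :> R by rewrite pnatr_eq0 -lt0n bin_gt0; lia.
have nd : odds i - odds (i - s.+1)%N != 0 by rewrite subr_eq0 odds_neq //; lia.
by move: nP; rewrite /odds_gaps => nP; field; rewrite nP nw nC nd.
Qed.

Lemma pivot_bv i j : (1 <= j)%N -> (j <= i <= n.+1)%N ->
  pivot A i j = (1 - x i) ^+ n * ('C(n, j.-1))%:R * odds_gaps j i.
Proof.
case: j => // s _ hi; rewrite /pivot neville_step_bv //; try lia.
by rewrite (divdiff_exp odds_neq) ?eqxx ?mulr1.
Qed.

Lemma pivot_bv_neq0 i j : (1 <= j)%N -> (j <= i)%N -> (i <= n.+1)%N -> pivot A i j != 0.
Proof.
move=> hj hji hi; rewrite pivot_bv ?hji //.
rewrite !mulf_neq0 ?expf_neq0 ?odds_gaps_neq0 ?hji ?subx_neq0 //; try lia.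
by rewrite pnatr_eq0 -lt0n bin_gt0; lia.
Qed.

Lemma odds_gapsE i j : (1 <= j)%N -> (j <= i <= n.+1)%N ->
  odds_gaps j i = (\prod_(1 <= k < j) (x i - x (i - k)%N)) /
     ((1 - x i) ^+ j.-1 * \prod_(1 <= k < j) (1 - x (i - k)%N)).
Proof.
move=> hj hji; rewrite /odds_gaps -(subn1 j) -prodr_const_nat -big_split -prodf_div /=.
apply: eq_big_nat => k hk.
have ni : 1 - x i != 0 by apply: subx_neq0; lia.
have nk : 1 - x (i - k)%N != 0 by apply: subx_neq0; lia.
by rewrite /odds; field; rewrite ni nk.
Qed.

Lemma pivot_bvE i j : (1 <= j)%N -> (j <= i <= n.+1)%N ->
  pivot A i j = ('C(n, j.-1))%:R * (1 - x i) ^+ (n.+1 - j)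
    * \prod_(1 <= k < j) (x i - x (i - k)%N) / \prod_(1 <= k < j) (1 - x (i - k)%N).
Proof.
move=> hj hji; rewrite pivot_bv // odds_gapsE //.
have ni : 1 - x i != 0 by apply: subx_neq0; lia.
have nS : \prod_(1 <= k < j) (1 - x (i - k)%N) != 0.
  by rewrite prodf_seq_neq0; apply/allP => k; rewrite mem_index_iota => hk; apply: subx_neq0; lia.
have -> : (1 - x i) ^+ n = (1 - x i) ^+ j.-1 * (1 - x i) ^+ (n.+1 - j).
  by rewrite -exprD; congr (_ ^+ _); lia.
by field; rewrite nS expf_neq0.
Qed.

Lemma multiplier_bv i j : (1 <= j <= n)%N -> (j.+1 <= i <= n.+1)%N ->
  multiplier A i j =
    ((1 - x i) ^+ (n - j + 1) * (1 - x (i - j)%N)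
       * \prod_(1 <= k < j) (x i - x (i - k)%N))
    / ((1 - x i.-1) ^+ (n - j + 2) * \prod_(2 <= k < j.+1) (x i.-1 - x (i - k)%N)).
Proof.
move=> /andP[hj hjn] /andP[hji hi].
rewrite /multiplier !pivot_bvE; try lia.
rewrite !(big_nat_pred_sub _ _ (fun k => x i.-1 - x k)) !(big_nat_pred_sub _ _ (fun k => 1 - x k)).
set S1 := \prod_(1 <= k < j) (1 - x (i - k)%N).
set S2 := \prod_(2 <= k < j.+1) (1 - x (i - k)%N).
set Q2 := \prod_(2 <= k < j.+1) (x i.-1 - x (i - k)%N).
have hS : S1 * (1 - x (i - j)%N) = (1 - x i.-1) * S2.
  by rewrite /S1 /S2 -big_nat_recr //= big_ltn // subn1.
have nS1 : S1 != 0.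
  by rewrite prodf_seq_neq0; apply/allP => k; rewrite mem_index_iota => hk; apply: subx_neq0; lia.
have nQ2 : Q2 != 0.
  rewrite prodf_seq_neq0; apply/allP => k; rewrite mem_index_iota => hk.
  by rewrite /= subr_eq0 eq_sym lt_eqF // lt_x //; lia.
have na : 1 - x i != 0 by apply: subx_neq0; lia.
have nb : 1 - x i.-1 != 0 by apply: subx_neq0; lia.
have nc : 1 - x (i - j)%N != 0 by apply: subx_neq0; lia.
have nC : ('C(n, j.-1))%:R != 0 :> R by rewrite pnatr_eq0 -lt0n bin_gt0; lia.
have -> : S2 = S1 * (1 - x (i - j)%N) / (1 - x i.-1) by rewrite hS; field.
have -> : (n.+1 - j = n - j + 1)%N by lia.
have -> : (n - j + 2 = (n - j + 1).+1)%N by lia.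
by rewrite exprS; field; rewrite !expf_neq0 // nQ2 nS1 nc nb nC.
Qed.

End BernsteinVandermonde.

Theorem mainTheorem5 (R : realFieldType) (n : nat) (x : nat -> R) :
  (1 <= n)%N ->
  (forall r, (1 <= r <= n.+1)%N -> 0 < x r /\ x r < 1) ->
  (forall r, (1 <= r)%N -> (r < n.+1)%N -> x r < x r.+1) ->
  (forall i j, (1 <= j)%N -> (j <= i)%N -> (i <= n.+1)%N ->
     pivot (bernstein_vandermonde n x) i j != 0) /\
  (forall i j, (1 <= j <= n)%N -> (j.+1 <= i <= n.+1)%N ->
     multiplier (bernstein_vandermonde n x) i j =
       ((1 - x i) ^+ (n - j + 1) * (1 - x (i - j)%N)
          * \prod_(1 <= k < j) (x i - x (i - k)%N))
       / ((1 - x i.-1) ^+ (n - j + 2)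
          * \prod_(2 <= k < j.+1) (x i.-1 - x (i - k)%N))).
Proof.
move=> _ x01 x_incr; split.
- exact: pivot_bv_neq0.
- exact: multiplier_bv.
Qed.
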